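(* If $G$ is a nice connected graph of order $n$ and size $m$, then ${\rm ML}^{\rm W}(G) \leq 2(m+n-1)$; in particular ${\rm ML}^{\rm W}(G)\leq 4m$.
   Context: All graphs are finite and simple. A walk of a graph $G$ is a sequence of vertices $u_0u_1\dots u_p$ with $u_tu_{t+1}\in E(G)$ for all $t$ (vertices and edges may repeat); its length is $p$. For a walk $W$ of $G$, $G+W$ is the multigraph on $V(G)$ whose edge multiset consists of $E(G)$ together with each edge added as many times as $W$ traverses it. A multigraph is locally irregular if no two adjacent vertices have the same degree; a walk $W$ is irregularising if $G+W$ is locally irregular. A graph is nice if it is connected and not isomorphic to $K_2$. ${\rm ML}^{\rm W}(G)$ denotes the minimum length of an irregularising walk of $G$ (a walk of length $0$ is allowed). *)

From mathcomp Require Import all_boot.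
Set Implicit Arguments. Unset Strict Implicit. Unset Printing Implicit Defensive.

Definition simple_graph (T : finType) (e : rel T) : Prop :=
  symmetric e /\ irreflexive e.

(* order n = #|T|; size m = number of edges (2-element vertex sets {x,y} with x~y) *)
Definition edge_set (T : finType) (e : rel T) : {set {set T}} :=
  [set E : {set T} | [exists x, exists y, e x y && (E == [set x; y])]].
Definition gsize (T : finType) (e : rel T) : nat := #|edge_set e|.

Definition connected_graph (T : finType) (e : rel T) : Prop :=
  0 < #|T| /\ forall x y : T, connect e x y.

Definition iso_K2 (T : finType) (e : rel T) : Prop :=
  exists f : T -> bool, bijective f /\ forall x y, e x y = (f x != f y).

Definition nice (T : finType) (e : rel T) : Prop :=
  connected_graph e /\ ~ iso_K2 e.

(* A walk u0 u1 ... up is given by its start u0 and the list [u1;...;up];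
   its length is p = size s. *)
Definition is_walk (T : finType) (e : rel T) (u0 : T) (s : seq T) : bool :=
  path e u0 s.

Definition trav (T : finType) (u0 : T) (s : seq T) (x y : T) : nat :=
  count (fun p : T * T => ((p.1 == x) && (p.2 == y)) || ((p.1 == y) && (p.2 == x)))
        (zip (u0 :: s) s).

(* degree of v in the multigraph G + W (each edge xy of G has multiplicity
   1 + trav x y; W only uses edges of G) *)
Definition deg_plus (T : finType) (e : rel T) (u0 : T) (s : seq T) (v : T) : nat :=
  \sum_(y : T | e v y) (1 + trav u0 s v y).

(* G + W is locally irregular: adjacent vertices have distinct degrees
   (adjacency in G+W coincides with adjacency in G). *)
Definition irregularising (T : finType) (e : rel T) (u0 : T) (s : seq T) : Prop :=
  forall x y : T, e x y -> deg_plus e u0 s x != deg_plus e u0 s y.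

Definition MLW_le (T : finType) (e : rel T) (k : nat) : Prop :=
  exists (u0 : T) (s : seq T), is_walk e u0 s /\ irregularising e u0 s /\ size s <= k.

From mathcomp Require Import all_boot zify.
Set Implicit Arguments. Unset Strict Implicit. Unset Printing Implicit Defensive.

(* Pick a vertex r with two neighbours c and z, and order the vertices as
   r, c, v_3, ..., v_n so that each has an earlier neighbour.  Going to each
   v_i from an earlier neighbour and back along the resulting spanning tree is
   a closed walk of length 2(n-1) that adds an even amount to every degree; a
   final step r z, taken or not, gives r and c degrees of different parity.
   Then, for i = n, ..., 3, walking j <= (number of later neighbours of v_i)
   times back and forth along an edge from v_i to an earlier neighbour raises
   the degree of v_i by 2j, which can be chosen to avoid the degrees of its
   later neighbours; finally r and c are raised together along the edge rc,
   their own conflict being excluded by parity.  The multiplicities j add up to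
   less than m, and each detour u v u can be spliced into the closed walk, so
   the walk has length at most 2(n-1) + 2(m-1) + 1 <= 2(m+n-1); finally
   n - 1 <= m for a connected graph. *)

Lemma add_double_inj (a : nat) : injective (fun j => a + 2 * j).
Proof. by move=> i j; lia. Qed.

Lemma count_preim_le (f : nat -> nat) (F s : seq nat) :
  injective f -> uniq s -> count (fun j => f j \in F) s <= size F.
Proof.
move=> f_inj s_uniq; rewrite -size_filter -(size_map f).
apply: uniq_leq_size; first by rewrite map_inj_uniq ?filter_uniq.
by move=> y /mapP [j]; rewrite mem_filter => /andP [Fj _] ->.
Qed.

Lemma exists_avoiding (f1 f2 : nat -> nat) (F1 F2 : seq nat) :
  injective f1 -> injective f2 ->
  exists2 j, j <= size F1 + size F2 & (f1 j \notin F1) && (f2 j \notin F2).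
Proof.
move=> f1_inj f2_inj; set N := size F1 + size F2.
set good := fun j => (f1 j \notin F1) && (f2 j \notin F2).
have : has good (iota 0 N.+1).
  have bad1 := count_preim_le F1 f1_inj (iota_uniq 0 N.+1).
  have bad2 := count_preim_le F2 f2_inj (iota_uniq 0 N.+1).
  have badU := count_predUI (fun j => f1 j \in F1) (fun j => f2 j \in F2) (iota 0 N.+1).
  have goodC := count_predC good (iota 0 N.+1).
  have badC : count (predC good) (iota 0 N.+1) =
               count (predU (fun j => f1 j \in F1) (fun j => f2 j \in F2)) (iota 0 N.+1).
    by apply: eq_count => j; rewrite /= negb_and !negbK.
  rewrite has_count; move: goodC; rewrite badC size_iota; lia.
by case/hasP => j; rewrite mem_iota => /andP [_ lt_j] ?; exists j.
Qed.

Section Irregularising.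
Variables (T : finType) (e : rel T).
Hypotheses (sym_e : symmetric e) (irr_e : irreflexive e).

Definition degree (v : T) : nat := \sum_(y | e v y) 1.
Definition incident (v : T) (q : T * T) : bool := (q.1 == v) || (q.2 == v).
Definition walk_edges (u0 : T) (s : seq T) : seq (T * T) := zip (u0 :: s) s.

Lemma walk_edges_cat u0 p q :
  walk_edges u0 (p ++ q) = walk_edges u0 p ++ walk_edges (last u0 p) q.
Proof. by elim: p u0 => [|a p IHp] u0 //; rewrite /walk_edges /= in IHp *; rewrite IHp. Qed.

Lemma sum_incident_edge x1 x2 v : e x1 x2 ->
  \sum_(y | e v y) (((x1 == v) && (x2 == y)) || ((x1 == y) && (x2 == v)))
  = incident v (x1, x2).
Proof.
move=> e12; have x21 : (x2 == x1) = false by apply: contraTF e12 => /eqP ->; rewrite irr_e.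
rewrite /incident /=; have [<-|x1v] := eqVneq x1 v.
  rewrite (bigD1 x2) // big1 => [|y /andP [_ y2]]; first by rewrite eqxx x21 andbF.
  by rewrite [x2 == y]eq_sym (negbTE y2) x21 !andbF.
have [x2v|x2v] := eqVneq x2 v; last by rewrite big1 // => y _; rewrite andbF.
subst v; have e21 : e x2 x1 by rewrite sym_e.
rewrite (bigD1 x1) // big1 => [|y /andP [_ y1]]; first by rewrite eqxx.
by rewrite [x1 == y]eq_sym (negbTE y1).
Qed.

Lemma sum_trav u0 s v : path e u0 s ->
  \sum_(y | e v y) trav u0 s v y = count (incident v) (walk_edges u0 s).
Proof.
elim: s u0 => [|a s IHs] u0 /=; first by rewrite big1.
case/andP => e_u0a /IHs <-; rewrite -sum_incident_edge // -big_split.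
by apply: eq_bigr => y _.
Qed.

Lemma deg_plusE u0 s v : path e u0 s ->
  deg_plus e u0 s v = degree v + count (incident v) (walk_edges u0 s).
Proof. by move=> walk; rewrite /deg_plus big_split sum_trav. Qed.

(* Only incidences are recorded: the degrees of G + W depend on nothing else. *)
Definition doubled_walk (r : T) (s : seq T) (L : seq (T * T)) : Prop :=
  [/\ path e r s, last r s = r, size s = 2 * size L &
      forall v, count (incident v) (walk_edges r s) = 2 * count (incident v) L].

Lemma doubled_walk_nil r : doubled_walk r [::] [::].
Proof. by []. Qed.

Lemma doubled_walk_splice r s L u w : doubled_walk r s L -> u \in r :: s -> e u w ->
  exists2 s', doubled_walk r s' ((u, w) :: L) & {subset w :: r :: s <= r :: s'}.
Proof.
move=> + u_in euw; case/splitPl: u_in => p q pu [walk closed size_s inc].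
exists (p ++ w :: u :: q); last first.
  by move=> x; rewrite !(inE, mem_cat) => /or3P [-> | -> | /orP [] ->]; rewrite ?orbT.
split.
- by move: walk; rewrite !cat_path pu /= euw sym_e euw.
- by move: closed; rewrite !last_cat pu.
- by move: size_s; rewrite !size_cat /=; lia.
move=> v; move: (inc v); rewrite !walk_edges_cat !count_cat pu /= -/(walk_edges u q).
rewrite [incident v (w, u)]/incident orbC -/(incident v (u, w)).
by move: (incident v (u, w) : nat) => i; lia.
Qed.

Lemma doubled_walk_extend r s L W :
  doubled_walk r s L -> (forall x, x \in r :: s) -> all (fun q => e q.1 q.2) W ->
  exists2 s', doubled_walk r s' (W ++ L) & forall x, x \in r :: s'.
Proof.
move=> walk cover; elim: W => [|[u w] W IHW] /=; first by exists s.
case/andP => euw /IHW [s1 walk1 cover1].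
have [s2 walk2 sub2] := doubled_walk_splice walk1 (cover1 u) euw.
by exists s2 => // x; apply: sub2; rewrite inE cover1 orbT.
Qed.

Lemma deg_plus_doubled_walk r s L z (t : bool) : doubled_walk r s L -> e r z ->
  exists s', [/\ path e r s', size s' = size s + t &
    forall v, deg_plus e r s' v = degree v + 2 * count (incident v) L + t * incident v (r, z)].
Proof.
move=> [walk closed _ inc] erz; case: t; last first.
  by exists s; split => [||v]; rewrite ?addn0 // deg_plusE // inc.
exists (rcons s z); split; first by rewrite rcons_path walk closed.
- by rewrite size_rcons addn1.
move=> v; rewrite deg_plusE ?rcons_path ?walk ?closed //.
by rewrite -cats1 walk_edges_cat count_cat inc closed /= mul1n addn0 addnA.
Qed.

Fixpoint attached (pre l : seq T) : bool :=
  if l is v :: l' then has (e v) pre && attached (rcons pre v) l' else true.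

Lemma doubled_walk_attached r s L pre l :
  doubled_walk r s L -> {subset pre <= r :: s} -> attached pre l ->
  exists s' L', [/\ doubled_walk r s' L', size L' = size L + size l &
                    {subset pre ++ l <= r :: s'}].
Proof.
elim: l pre s L => [|v l IHl] pre s L walk sub /=.
  by move=> _; exists s, L; rewrite cats0 addn0.
case/andP => /hasP [u u_pre evu] att.
have [s1 walk1 sub1] := doubled_walk_splice walk (sub u u_pre) (etrans (sym_e u v) evu).
have sub_v : {subset rcons pre v <= r :: s1}.
  move=> x; rewrite mem_rcons inE => /predU1P [-> | x_pre]; apply: sub1.
    exact: mem_head.
  by rewrite inE sub ?orbT.
have [s2 [L2 [walk2 size_L2 sub2]]] := IHl _ _ _ walk1 sub_v att.
by exists s2, L2; rewrite -cat_rcons size_L2 /= addnS.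
Qed.

Lemma connect_exit (S : {pred T}) x y : connect e x y -> x \in S -> y \notin S ->
  exists u w, [/\ u \in S, w \notin S & e u w].
Proof.
case/connectP => p; elim: p x => [|v p IHp] x /=; first by move=> _ -> ->.
case/andP => exv walk y_last x_in y_out.
case v_in: (v \in S); first exact: IHp walk y_last v_in y_out.
by exists x, v; rewrite v_in.
Qed.

Lemma exists_notin (s : seq T) : size s < #|T| -> exists x, x \notin s.
Proof.
move=> lt_s; apply/existsP; apply: contraTT lt_s => /existsPn all_in.
rewrite -leqNgt (leq_trans _ (card_size s)) // subset_leq_card //.
by apply/subsetP => x _; apply/negbNE/all_in.
Qed.

Lemma attached_cover a pre : (forall x y, connect e x y) -> uniq (a :: pre) ->
  exists l, [/\ uniq (a :: pre ++ l), attached (a :: pre) l & forall x, x \in a :: pre ++ l].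
Proof.
move=> conn; have [k] := ubnP (#|T| - size (a :: pre)).
elim: k pre => // k IHk pre lt_k pre_uniq.
case: (pickP [predC a :: pre]) => [x /= x_out | all_in]; last first.
  by exists [::]; rewrite cats0; split => // x; apply/negbFE/all_in.
have [u [w [u_pre w_out euw]]] := connect_exit (conn a x) (mem_head a pre) x_out.
have w_uniq : uniq (a :: rcons pre w) by rewrite -rcons_cons rcons_uniq w_out.
have size_w : size (a :: rcons pre w) <= #|T| by rewrite -(card_uniqP w_uniq) max_card.
have [|l [l_uniq att cover]] := IHk (rcons pre w) _ w_uniq.
  by rewrite /= size_rcons in size_w lt_k *; lia.
exists (w :: l); rewrite -cat_rcons; split => //; apply/andP; split => //.
by apply/hasP; exists u; rewrite // sym_e.
Qed.

Fixpoint induced_size (l : seq T) : nat :=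
  if l is v :: l' then count (e v) l' + induced_size l' else 0.

Lemma induced_size_rcons l w : induced_size (rcons l w) = induced_size l + count (e w) l.
Proof.
elim: l => [|a l IHl] //=.
by rewrite IHl -cats1 count_cat /= [e a w]sym_e; lia.
Qed.

Lemma attached_induced_size pre l :
  attached pre l -> induced_size pre + size l <= induced_size (pre ++ l).
Proof.
elim: l pre => [|v l IHl] pre /=; first by rewrite cats0 addn0.
case/andP => v_att /IHl; rewrite -cat_rcons induced_size_rcons.
by move: v_att; rewrite has_count; lia.
Qed.

Lemma induced_size_le_card l : uniq l ->
  induced_size l <= #|[set E in edge_set e | E \subset l]|.
Proof.
elim: l => [|v l IHl] //= /andP [v_out l_uniq].
set A := [set E in edge_set e | E \subset l].
set B := [set [set v; y] | y in [seq y <- l | e v y]].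
have card_B : #|B| = count (e v) l.
  rewrite card_in_imset; first by rewrite -size_filter; apply/card_uniqP/filter_uniq.
  move=> y1 y2; rewrite !mem_filter => /andP [_ y1_in] _ /setP /(_ y1).
  rewrite !inE eqxx orbT => /esym /orP [/eqP y1v | /eqP //].
  by move: v_out; rewrite -y1v y1_in.
have AB0 : A :&: B = set0.
  apply/setP => E; rewrite !inE; apply/negP => /andP [/andP [_ sub] /imsetP [y _ E_vy]].
  by move: v_out; rewrite (subsetP sub) // E_vy !inE eqxx.
have := cardsUI A B; rewrite AB0 cards0 addn0 => card_AB.
apply: (@leq_trans #|A :|: B|); first by rewrite card_AB card_B addnC leq_add2r IHl.
apply/subset_leq_card/subsetP => E; rewrite !inE => /orP [/andP [-> sub] | /imsetP [y]].
  by apply/subsetP => x /(subsetP sub) x_in; rewrite inE x_in orbT.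
rewrite mem_filter => /andP [evy y_in] ->; apply/andP; split.
  by apply/existsP; exists v; apply/existsP; exists y; rewrite evy eqxx.
by apply/subsetP => x; rewrite !inE => /predU1P [-> | /eqP ->]; rewrite ?eqxx ?y_in ?orbT.
Qed.

Lemma induced_size_le_gsize l : uniq l -> induced_size l <= gsize e.
Proof.
move/induced_size_le_card/leq_trans; apply.
by apply/subset_leq_card/subsetP => E; rewrite inE => /andP [].
Qed.

Definition lifted (b : T -> nat) (W : seq (T * T)) (v : T) : nat :=
  b v + 2 * count (incident v) W.

Lemma lifted_nseq b W q j v :
  lifted b (nseq j q ++ W) v = lifted b W v + 2 * (incident v q * j).
Proof. by rewrite /lifted count_cat count_nseq; lia. Qed.

Lemma odd_lifted b W v : odd (lifted b W v) = odd (b v).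
Proof. by rewrite /lifted oddD oddM addbF. Qed.

Lemma irregular_cons (f : T -> nat) v l :
  {in l &, forall x y, e x y -> f x != f y} ->
  (forall y, y \in l -> e v y -> f v != f y) ->
  {in v :: l &, forall x y, e x y -> f x != f y}.
Proof.
move=> irr_l irr_v x y; rewrite !inE => /predU1P [-> | x_in] /predU1P [-> | y_in] exy.
- by rewrite irr_e in exy.
- exact: irr_v.
- by rewrite eq_sym irr_v // sym_e.
- exact: irr_l.
Qed.

Lemma irregular_lift_attached b pre l : uniq (pre ++ l) -> attached pre l ->
  exists W, [/\ all (fun q => e q.1 q.2) W, size W <= induced_size l &
                {in l &, forall x y, e x y -> lifted b W x != lifted b W y}].
Proof.
elim: l pre => [|v l IHl] pre /=; first by exists [::].
move=> pvl_uniq /andP [/hasP [u u_pre evu] att].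
have pvl_uniq' : uniq (rcons pre v ++ l) by rewrite cat_rcons.
have [W [edges_W size_W irr_W]] := IHl _ pvl_uniq' att.
set F := map (lifted b W) (filter (e v) l).
have [j le_j /andP [fresh _]] :=
  exists_avoiding F [::] (@add_double_inj (lifted b W v)) (@add_double_inj 0).
move: pvl_uniq; rewrite cat_uniq /= => /and4P [_ /norP [_ /hasPn l_out] v_out _].
have lifted_l y : y \in l -> lifted b (nseq j (u, v) ++ W) y = lifted b W y.
  move=> y_in; rewrite lifted_nseq /incident /=.
  have -> : (u == y) = false by apply: contraNF (l_out y y_in) => /eqP <-.
  have -> : (v == y) = false by apply: contraNF v_out => /eqP ->.
  by rewrite addn0.
exists (nseq j (u, v) ++ W); split.
- by rewrite all_cat edges_W all_nseq sym_e evu orbT.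
- rewrite size_cat size_nseq /= addn0 size_map size_filter in le_j *.
  exact: leq_add.
apply: irregular_cons => [x y x_in y_in | y y_in evy].
  by rewrite !lifted_l //; apply: irr_W.
rewrite (lifted_l y y_in) lifted_nseq /incident /= eqxx orbT mul1n.
by apply: contraNneq fresh => ->; apply: map_f; rewrite mem_filter evy.
Qed.

Lemma irregular_lift_ordering b r c rest :
  uniq [:: r, c & rest] -> e r c -> attached [:: r; c] rest -> odd (b r) != odd (b c) ->
  exists W, [/\ all (fun q => e q.1 q.2) W, size W < induced_size [:: r, c & rest] &
                {in [:: r, c & rest] &, forall x y, e x y -> lifted b W x != lifted b W y}].
Proof.
move=> o_uniq erc att par.
have [W [edges_W size_W irr_W]] := @irregular_lift_attached b [:: r; c] rest o_uniq att.
set Fc := map (lifted b W) (filter (e c) rest).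
set Fr := map (lifted b W) (filter (e r) rest).
have [j le_j /andP [fresh_c fresh_r]] :=
  exists_avoiding Fc Fr (@add_double_inj (lifted b W c)) (@add_double_inj (lifted b W r)).
move: o_uniq; rewrite /= !inE => /and3P [/norP [rc r_out] c_out _].
set W' := nseq j (r, c) ++ W.
have lifted_rest y : y \in rest -> lifted b W' y = lifted b W y.
  move=> y_in; rewrite lifted_nseq /incident /=.
  have -> : (r == y) = false by apply: contraNF r_out => /eqP ->.
  have -> : (c == y) = false by apply: contraNF c_out => /eqP ->.
  by rewrite addn0.
have lifted_r : lifted b W' r = lifted b W r + 2 * j.
  by rewrite lifted_nseq /incident /= eqxx mul1n.
have lifted_c : lifted b W' c = lifted b W c + 2 * j.
  by rewrite lifted_nseq /incident /= eqxx orbT mul1n.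
exists W'; split.
- by rewrite all_cat edges_W all_nseq erc orbT.
- rewrite size_cat size_nseq !size_map !size_filter in le_j *.
  by rewrite /= erc; lia.
apply: irregular_cons; first apply: irregular_cons.
- by move=> x y x_in y_in; rewrite !lifted_rest //; apply: irr_W.
- move=> y y_in ecy; rewrite lifted_c lifted_rest //.
  by apply: contraNneq fresh_c => ->; apply: map_f; rewrite mem_filter ecy.
move=> y; rewrite inE => /predU1P [-> _ | y_in ery].
  by apply: contra par => /eqP lifted_rc; rewrite -(odd_lifted b W' r) lifted_rc odd_lifted.
rewrite lifted_r lifted_rest //.
by apply: contraNneq fresh_r => ->; apply: map_f; rewrite mem_filter ery.
Qed.

Lemma exists_cherry : (forall x y, connect e x y) -> 2 < #|T| ->
  exists r c z, [/\ e r c, e r z & c != z].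
Proof.
move=> conn T_gt2; have /card_gt0P [x _] : 0 < #|T| by apply: ltnW (ltnW T_gt2).
have [y y_out] := @exists_notin [:: x] (ltnW T_gt2).
have [x' [w [x'_in w_out exw]]] := connect_exit (conn x y) (mem_head x [::]) y_out.
move: x'_in exw; rewrite inE => /eqP -> exw.
have [z z_out] := @exists_notin [:: x; w] T_gt2.
have [u [z' [u_in z'_out uz']]] := connect_exit (conn x z) (mem_head x _) z_out.
move: z'_out; rewrite !inE => /norP [z'x z'w].
move: u_in uz'; rewrite !inE => /orP [] /eqP -> uz'.
  by exists x, w, z'; rewrite eq_sym.
by exists w, x, z'; rewrite sym_e eq_sym.
Qed.

Lemma size_uniq_cover (s : seq T) : uniq s -> (forall x, x \in s) -> size s = #|T|.
Proof. by move=> s_uniq cover; rewrite -(card_uniqP s_uniq) cardT; apply: eq_cardT. Qed.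

Lemma MLW_le_of_cherry r c z : (forall x y, connect e x y) -> e r c -> e r z -> c != z ->
  MLW_le e (2 * (gsize e + #|T| - 1)).
Proof.
move=> conn erc erz cz.
have rc : r != c by apply: contraTneq erc => ->; rewrite irr_e.
have rc_uniq : uniq [:: r; c] by rewrite /= inE rc.
have [rest [o_uniq att cover]] := @attached_cover r [:: c] conn rc_uniq.
have length_bound w (k : nat) : w < gsize e -> k <= 1 ->
    2 * (w + size (c :: rest)) + k <= 2 * (gsize e + #|T| - 1).
  by rewrite -(size_uniq_cover o_uniq cover) /=; lia.
have att_c : attached [:: r] (c :: rest) by rewrite /= sym_e erc att.
have [s0 [LT [walk0 size_LT cover0]]] := @doubled_walk_attached r _ _ [:: r] (c :: rest)
  (doubled_walk_nil r) (fun x x_in => x_in) att_c.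
have [t t_par] : {t : bool | odd (degree r + t) != odd (degree c)}.
  exists (odd (degree c) == odd (degree r)).
  by rewrite oddD; case: (odd (degree r)); case: (odd (degree c)).
pose b v := degree v + 2 * count (incident v) LT + t * incident v (r, z).
have par : odd (b r) != odd (b c).
  have inc_c : incident c (r, z) = false.
    by rewrite /incident /= (negbTE rc) eq_sym (negbTE cz).
  have inc_r : incident r (r, z) by rewrite /incident eqxx.
  by move: t_par; rewrite /b inc_r inc_c muln1 muln0 !mul2n !oddD !odd_double !addbF.
have [W [edges_W size_W irr_W]] := irregular_lift_ordering o_uniq erc att par.
have [s1 walk1 _] := doubled_walk_extend walk0 (fun x => cover0 x (cover x)) edges_W.
have [s [walk size_s deg_s]] := deg_plus_doubled_walk t walk1 erz.
have deg_lifted v : deg_plus e r s v = lifted b W v.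
  by rewrite deg_s count_cat /lifted /b mulnDr [2 * _ + _]addnC addnA addnAC.
exists r, s; split => //; split.
  by move=> x y exy; rewrite !deg_lifted; apply: irr_W.
case: walk1 => _ _ size_s1 _; rewrite size_s size_s1 size_cat size_LT add0n.
exact: length_bound (leq_trans size_W (induced_size_le_gsize o_uniq)) (leq_b1 t).
Qed.

Lemma MLW_le_mono k k' : k <= k' -> MLW_le e k -> MLW_le e k'.
Proof.
move=> le_k [u0 [s [walk [irr size_s]]]].
by exists u0, s; do !split => //; apply: leq_trans le_k.
Qed.

Lemma MLW_le_card_le1 k (x0 : T) : #|T| <= 1 -> MLW_le e k.
Proof.
move=> T_le1; exists x0, [::]; split => //; split => // x y exy; exfalso.
move: T_le1; rewrite leqNgt => /negP; apply; apply/card_gt1P; exists x, y.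
by split => //; apply: contraTneq exy => ->; rewrite irr_e.
Qed.

Lemma card2_iso_K2 : (forall x y, connect e x y) -> #|T| = 2 -> iso_K2 e.
Proof.
move=> conn T2; have /card_gt1P [x0 [x1 [_ _ x01]]] : 1 < #|T| by rewrite T2.
have x10 : (x1 == x0) = false by rewrite eq_sym (negbTE x01).
have two x : (x == x0) || (x == x1).
  apply/negPn/negP => /norP [xx0 xx1]; have : 2 < #|T|.
    by apply/card_gt2P; exists x0, x1, x; split; split; rewrite // eq_sym.
  by rewrite T2.
have e01 : e x0 x1.
  have x1_out : x1 \notin [:: x0] by rewrite inE x10.
  have [u [w [u_x0 w_out euw]]] := connect_exit (conn x0 x1) (mem_head x0 [::]) x1_out.
  move: u_x0 w_out (two w); rewrite !inE => /eqP u_x0 /negbTE -> /eqP w_x1.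
  by rewrite -u_x0 -w_x1.
exists (fun x => x == x0); split.
  exists (fun b : bool => if b then x0 else x1) => [x | [] /=]; rewrite ?eqxx ?x10 //.
  by case/orP: (two x) => /eqP ->; rewrite ?eqxx ?x10.
move=> x y; case/orP: (two x) => /eqP ->; case/orP: (two y) => /eqP ->;
  by rewrite ?eqxx ?x10 ?irr_e // sym_e.
Qed.

Lemma connected_card_le (x0 : T) : (forall x y, connect e x y) -> #|T| <= (gsize e).+1.
Proof.
move=> conn; have [l [o_uniq att cover]] := @attached_cover x0 [::] conn isT.
have := attached_induced_size att; have := induced_size_le_gsize o_uniq.
by rewrite -(size_uniq_cover o_uniq cover) /=; lia.
Qed.

End Irregularising.

Theorem corollary4p2 (T : finType) (e : rel T) :
  simple_graph e -> nice e ->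
  MLW_le e (2 * (gsize e + #|T| - 1)) /\ MLW_le e (4 * gsize e).
Proof.
move=> [sym_e irr_e] [[T_gt0 conn] not_K2].
have /card_gt0P [x0 _] := T_gt0.
have MLW_bound : MLW_le e (2 * (gsize e + #|T| - 1)).
  case: (ltngtP #|T| 2) => [T_lt2 | T_gt2 | T_2].
  - exact: (MLW_le_card_le1 irr_e _ x0 T_lt2).
  - have [r [c [z [erc erz cz]]]] := exists_cherry sym_e conn T_gt2.
    exact: (MLW_le_of_cherry sym_e irr_e conn erc erz cz).
  - by case: not_K2; apply: card2_iso_K2 sym_e irr_e conn T_2.
split => //; apply: MLW_le_mono MLW_bound.
by have := connected_card_le sym_e x0 conn; lia.
Qed.
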